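(* For every integer $t$, \[ \sum_{n=1}^\infty\binom{2n}{n}\frac{O_n}{8^n}L_{n+t}=\sqrt2\,L_{t+1}\ln\alpha+\frac{\sqrt{10}\,\ln2}{2}F_{t+1},\qquad \sum_{n=1}^\infty\binom{2n}{n}\frac{O_n}{8^n}F_{n+t}=\sqrt2\,F_{t+1}\ln\alpha+\frac{\ln2}{\sqrt{10}}L_{t+1}, \] and, more generally, for every gibonacci sequence $(G_j)=(G_j(a,b))$, \[ \sum_{n=1}^\infty\binom{2n}{n}\frac{O_n}{8^n}G_{n+t}=\sqrt2\,G_{t+1}\ln\alpha+\frac{\ln2}{\sqrt{10}}\bigl(G_{t+2}+G_t\bigr). \]
   Context: $O_n=\sum_{j=1}^n\frac1{2j-1}$. $F_n$ and $L_n$ are the Fibonacci and Lucas numbers ($F_0=0,F_1=1$, $L_0=2,L_1=1$, $u_n=u_{n-1}+u_{n-2}$), extended to all integers by the recurrence. $\alpha=(1+\sqrt5)/2$, $\beta=-1/\alpha$, so $F_n=(\alpha^n-\beta^n)/(\alpha-\beta)$, $L_n=\alpha^n+\beta^n$. For numbers $a,b$ not both zero, the gibonacci sequence $G_j=G_j(a,b)$ is defined by $G_0=a$, $G_1=b$, $G_j=G_{j-1}+G_{j-2}$, extended to negative indices by $G_{-j}=G_{-(j-2)}-G_{-(j-1)}$; equivalently $G_j=\frac{(b-a\beta)\alpha^j+(a\alpha-b)\beta^j}{\alpha-\beta}$. *)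

From Stdlib Require Import Reals ZArith Lia.
From Coquelicot Require Import Coquelicot.
Open Scope R_scope.

Fixpoint Oh (n : nat) : R :=
  match n with
  | O => 0
  | S m => Oh m + / (2 * INR (S m) - 1)
  end.

Fixpoint gib_pos_pair (a b : R) (n : nat) : R * R :=
  match n with
  | O => (a, b)
  | S m => let p := gib_pos_pair a b m in (snd p, fst p + snd p)
  end.
Definition gib_pos (a b : R) (n : nat) : R := fst (gib_pos_pair a b n).

(* H_j = G_{-j}, pairs (H_j, H_{j+1}); H_0 = a, H_1 = G_{-1} = b - a,
   and G_{-(j+2)} = G_{-j} - G_{-(j+1)}. *)
Fixpoint gib_neg_pair (a b : R) (n : nat) : R * R :=
  match n with
  | O => (a, b - a)
  | S m => let p := gib_neg_pair a b m in (snd p, fst p - snd p)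
  end.
Definition gib_neg (a b : R) (n : nat) : R := fst (gib_neg_pair a b n).

Definition gib (a b : R) (j : Z) : R :=
  match j with
  | Z0 => a
  | Zpos p => gib_pos a b (Pos.to_nat p)
  | Zneg p => gib_neg a b (Pos.to_nat p)
  end.

Definition Fib (j : Z) : R := gib 0 1 j.
Definition Luc (j : Z) : R := gib 2 1 j.

Definition alpha : R := (1 + sqrt 5) / 2.

Definition term (u : Z -> R) (t : Z) (n : nat) : R :=
  Binomial.C (2 * n)%nat n * Oh n / 8 ^ n * u (Z.of_nat n + t)%Z.

From Stdlib Require Import Reals ZArith Lia Lra.
From Coquelicot Require Import Coquelicot.
Open Scope R_scope.

(* With [c_n = C(2n,n)] and [a_n = c_n O_n] one has [(n+1) c_(n+1) = 2(2n+1) c_n]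
   and [(n+1) a_(n+1) = 2(2n+1) a_n + 2 c_n], i.e. on [|x| < 1/4] the generating
   functions satisfy [(1-4x) C' = 2C] and [(1-4x) A' = 2A + 2C].  Hence
   [sqrt (1-4x) C] and [sqrt (1-4x) A + ln (1-4x) / 2] are constant, which gives
   [A(x) = - ln (1-4x) / (2 sqrt (1-4x))].  By Binet, [G_(n+t) = U alpha^n + V beta^n],
   so the series equals [U A(alpha/8) + V A(beta/8)]; since [1 - alpha/2 = 1/(2 alpha^2)]
   and [1 - beta/2 = alpha^2/2], both values are explicit in [ln alpha] and [ln 2]. *)

Definition central_binom (n : nat) : R := Binomial.C (2 * n) n.

Definition central_binom_Oh (n : nat) : R := central_binom n * Oh n.

Definition central_binom_Oh_gf (x : R) : R := - ln (1 - 4 * x) / (2 * sqrt (1 - 4 * x)).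

Lemma central_binom_0 : central_binom 0 = 1.
Proof. unfold central_binom, Binomial.C; simpl; field. Qed.

Lemma central_binom_pos (n : nat) : 0 < central_binom n.
Proof.
  unfold central_binom, Binomial.C. apply Rdiv_lt_0_compat.
  - apply INR_fact_lt_0.
  - apply Rmult_lt_0_compat; apply INR_fact_lt_0.
Qed.

Lemma central_binom_succ (n : nat) :
  INR (S n) * central_binom (S n) = 2 * (2 * INR n + 1) * central_binom n.
Proof.
  unfold central_binom, Binomial.C.
  replace (2 * S n - S n)%nat with (S n) by lia.
  replace (2 * n - n)%nat with n by lia.
  replace (2 * S n)%nat with (S (S (2 * n))) by lia.
  change (fact (S (S (2 * n)))) with (S (S (2 * n)) * (S (2 * n) * fact (2 * n)))%nat.
  change (fact (S n)) with (S n * fact n)%nat.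
  rewrite !mult_INR, !S_INR, mult_INR.
  assert (Hn := INR_fact_neq_0 n). assert (H2n := INR_fact_neq_0 (2 * n)).
  assert (0 <= INR n) by apply pos_INR.
  simpl (INR 2). field. repeat split; lra.
Qed.

Lemma central_binom_le_pow4 (n : nat) : central_binom n <= 4 ^ n.
Proof.
  induction n as [|n IH].
  - rewrite central_binom_0. simpl. lra.
  - assert (Hrec := central_binom_succ n). assert (Hpos := central_binom_pos n).
    assert (0 <= INR n) by apply pos_INR.
    rewrite S_INR in Hrec.
    assert (central_binom (S n) <= 4 * central_binom n).
    { apply Rmult_le_reg_r with (INR n + 1); [lra|]. rewrite Rmult_comm, Hrec. nra. }
    simpl. lra.
Qed.

Lemma Oh_succ (n : nat) : Oh (S n) = Oh n + / (2 * INR n + 1).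
Proof.
  replace (2 * INR n + 1) with (2 * INR (S n) - 1) by (rewrite S_INR; ring).
  reflexivity.
Qed.

Lemma Oh_bounds (n : nat) : 0 <= Oh n <= INR n.
Proof.
  induction n as [|n IH]; [simpl; lra|].
  rewrite Oh_succ, S_INR. assert (0 <= INR n) by apply pos_INR.
  assert (0 < / (2 * INR n + 1)) by (apply Rinv_0_lt_compat; lra).
  assert (/ (2 * INR n + 1) <= 1) by (rewrite <- Rinv_1; apply Rinv_le_contravar; lra).
  lra.
Qed.

Lemma central_binom_Oh_0 : central_binom_Oh 0 = 0.
Proof. unfold central_binom_Oh. simpl Oh. ring. Qed.

Lemma central_binom_Oh_succ (n : nat) :
  INR (S n) * central_binom_Oh (S n)
  = 2 * (2 * INR n + 1) * central_binom_Oh n + 2 * central_binom n.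
Proof.
  unfold central_binom_Oh. rewrite Oh_succ, <- Rmult_assoc, central_binom_succ.
  assert (0 <= INR n) by apply pos_INR.
  field. lra.
Qed.

Lemma CV_radius_le_of_Rabs_le (a b : nat -> R) :
  (forall n, Rabs (a n) <= Rabs (b n)) -> Rbar_le (CV_radius b) (CV_radius a).
Proof.
  intros Hab. apply (is_lub_Rbar_subset (CV_disk a) (CV_disk b)).
  - intros r Hr. eapply (@ex_series_le R_AbsRing R_CompleteNormedModule); [|exact Hr].
    intros n. change (norm (Rabs (a n * r ^ n))) with (Rabs (Rabs (a n * r ^ n))).
    rewrite Rabs_Rabsolu, !Rabs_mult. apply Rmult_le_compat_r; [apply Rabs_pos | apply Hab].
  - apply Lub_Rbar_correct.
  - apply Lub_Rbar_correct.
Qed.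

Lemma CV_radius_pow4 : CV_radius (fun n => 4 ^ n) = / 4.
Proof.
  apply CV_radius_finite_DAlembert; [intros; apply pow_nonzero; lra | lra |].
  apply is_lim_seq_ext with (fun _ => 4); [|apply is_lim_seq_const].
  intros n. assert (0 < 4 ^ n) by (apply pow_lt; lra).
  simpl. rewrite Rabs_pos_eq; [field; lra|].
  apply Rlt_le, Rdiv_lt_0_compat; nra.
Qed.

Lemma PS_incr_1_derive (a : nat -> R) (n : nat) : PS_incr_1 (PS_derive a) n = INR n * a n.
Proof. destruct n; [simpl; change (@zero R_NormedModule) with 0; ring | reflexivity]. Qed.

Lemma CV_radius_central_binom : Rbar_le (/ 4) (CV_radius central_binom).
Proof.
  rewrite <- CV_radius_pow4. apply CV_radius_le_of_Rabs_le. intros n.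
  assert (Hle := central_binom_le_pow4 n). assert (Hpos := central_binom_pos n).
  rewrite !Rabs_pos_eq; lra.
Qed.

Lemma CV_radius_central_binom_Oh : Rbar_le (/ 4) (CV_radius central_binom_Oh).
Proof.
  rewrite <- CV_radius_pow4, <- CV_radius_derive, <- CV_radius_incr_1.
  apply CV_radius_le_of_Rabs_le. intros n. rewrite PS_incr_1_derive.
  unfold central_binom_Oh.
  assert (Hle := central_binom_le_pow4 n). assert (Hpos := central_binom_pos n).
  assert (HO := Oh_bounds n). assert (0 <= INR n) by apply pos_INR.
  assert (0 < 4 ^ n) by (apply pow_lt; lra).
  rewrite !Rabs_pos_eq; nra.
Qed.

Lemma PSeries_derive_mul_1_sub_4x (c : nat -> R) (x : R) :
  Rbar_lt (Rabs x) (CV_radius c) ->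
  PSeries (PS_derive c) x * (1 - 4 * x)
  = PSeries (fun n => PS_derive c n - 4 * (INR n * c n)) x.
Proof.
  intros Hx.
  rewrite (PSeries_ext (fun n => PS_derive c n - 4 * (INR n * c n))
            (PS_minus (PS_derive c) (PS_scal 4 (PS_incr_1 (PS_derive c))))).
  - rewrite PSeries_minus, PSeries_scal, PSeries_incr_1; [ring | |].
    + apply ex_pseries_derive, Hx.
    + apply ex_pseries_scal; [intros; apply Rmult_comm|].
      apply ex_pseries_incr_1, ex_pseries_derive, Hx.
  - intros n. unfold PS_minus, PS_scal. rewrite PS_incr_1_derive. reflexivity.
Qed.

Lemma is_derive_sqrt_mul_PSeries (c d : nat -> R) (x : R) :
  (forall n, INR (S n) * c (S n) = 2 * (2 * INR n + 1) * c n + d n) ->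
  Rbar_lt (Rabs x) (CV_radius c) -> ex_pseries d x -> x < / 4 ->
  is_derive (fun y => sqrt (1 - 4 * y) * PSeries c y) x
    (PSeries d x / sqrt (1 - 4 * x)).
Proof.
  intros Hrec Hc Hd Hx.
  assert (Hs : 0 < sqrt (1 - 4 * x)) by (apply sqrt_lt_R0; lra).
  assert (Hss : sqrt (1 - 4 * x) * sqrt (1 - 4 * x) = 1 - 4 * x) by (apply sqrt_sqrt; lra).
  assert (Dsqrt : is_derive (fun y => sqrt (1 - 4 * y)) x (-4 / (2 * sqrt (1 - 4 * x)))).
  { apply (is_derive_sqrt (fun y => 1 - 4 * y)); [|lra]. auto_derive; [exact I | ring]. }
  assert (Dc := is_derive_PSeries c x Hc).
  assert (Hode : PSeries (PS_derive c) x * (1 - 4 * x) = 2 * PSeries c x + PSeries d x).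
  { rewrite PSeries_derive_mul_1_sub_4x by exact Hc.
    rewrite (PSeries_ext _ (PS_plus (PS_scal 2 c) d)).
    - rewrite PSeries_plus, PSeries_scal; [reflexivity | | exact Hd].
      apply ex_pseries_scal; [intros; apply Rmult_comm | apply CV_radius_inside, Hc].
    - intros n. unfold PS_derive, PS_plus, PS_scal.
      change (plus (scal 2 (c n)) (d n)) with (2 * c n + d n).
      rewrite Hrec. lra. }
  replace (PSeries d x / sqrt (1 - 4 * x))
    with (plus (mult (-4 / (2 * sqrt (1 - 4 * x))) (PSeries c x))
               (mult (sqrt (1 - 4 * x)) (PSeries (PS_derive c) x))).
  - apply (is_derive_mult _ _ _ _ _ Dsqrt Dc). intros; apply Rmult_comm.
  - unfold plus, mult; simpl.
    apply Rmult_eq_reg_l with (sqrt (1 - 4 * x)); [|lra].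
    field_simplify; [nra | lra | lra].
Qed.

Lemma const_of_is_derive_0 (f : R -> R) (r x : R) :
  Rabs x < r -> (forall y, Rabs y < r -> is_derive f y 0) -> f x = f 0.
Proof.
  intros Hx Hf. apply Rabs_def2 in Hx.
  destruct (Rtotal_order x 0) as [Hl|[->|Hg]]; [| reflexivity |].
  - apply eq_is_derive; [|exact Hl]. intros y Hy. apply Hf, Rabs_def1; lra.
  - symmetry. apply eq_is_derive; [|exact Hg]. intros y Hy. apply Hf, Rabs_def1; lra.
Qed.

Lemma PSeries_central_binom (x : R) :
  Rabs x < / 4 -> PSeries central_binom x = / sqrt (1 - 4 * x).
Proof.
  intros Hx.
  assert (Hs : 0 < sqrt (1 - 4 * x)) by (apply Rabs_def2 in Hx; apply sqrt_lt_R0; lra).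
  assert (E : sqrt (1 - 4 * x) * PSeries central_binom x = 1).
  { rewrite (const_of_is_derive_0
      (fun y => sqrt (1 - 4 * y) * PSeries central_binom y) (/ 4) x Hx).
    - rewrite PSeries_0, central_binom_0, Rmult_0_r, Rminus_0_r, sqrt_1. ring.
    - intros y Hy.
      assert (Hsy : 0 < sqrt (1 - 4 * y)) by (apply Rabs_def2 in Hy; apply sqrt_lt_R0; lra).
      replace 0 with (PSeries (fun _ => 0) y / sqrt (1 - 4 * y))
        by (rewrite PSeries_const_0; field; lra).
      apply is_derive_sqrt_mul_PSeries.
      + intros n. rewrite central_binom_succ. ring.
      + exact (Rbar_lt_le_trans (Rabs y) (/ 4) _ Hy CV_radius_central_binom).
      + apply CV_radius_inside. rewrite CV_radius_const_0. exact I.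
      + apply Rabs_def2 in Hy. lra. }
  apply Rmult_eq_reg_l with (sqrt (1 - 4 * x)); [|lra].
  rewrite E. field. lra.
Qed.

Lemma PSeries_central_binom_Oh (x : R) :
  Rabs x < / 4 -> PSeries central_binom_Oh x = central_binom_Oh_gf x.
Proof.
  intros Hx.
  assert (Hs : 0 < sqrt (1 - 4 * x)) by (apply Rabs_def2 in Hx; apply sqrt_lt_R0; lra).
  assert (E : sqrt (1 - 4 * x) * PSeries central_binom_Oh x + ln (1 - 4 * x) / 2 = 0).
  { rewrite (const_of_is_derive_0
      (fun y => sqrt (1 - 4 * y) * PSeries central_binom_Oh y + ln (1 - 4 * y) / 2) (/ 4) x Hx).
    - rewrite PSeries_0, central_binom_Oh_0, !Rmult_0_r, Rminus_0_r, ln_1. field.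
    - intros y Hy.
      assert (Hy' := Hy). apply Rabs_def2 in Hy'.
      assert (Hsy : 0 < sqrt (1 - 4 * y)) by (apply sqrt_lt_R0; lra).
      assert (Hssy : sqrt (1 - 4 * y) * sqrt (1 - 4 * y) = 1 - 4 * y) by (apply sqrt_sqrt; lra).
      assert (D1 : is_derive (fun y => sqrt (1 - 4 * y) * PSeries central_binom_Oh y) y
                     (PSeries (PS_scal 2 central_binom) y / sqrt (1 - 4 * y))).
      { apply is_derive_sqrt_mul_PSeries; [| | |lra].
        - intros n. rewrite central_binom_Oh_succ. reflexivity.
        - exact (Rbar_lt_le_trans (Rabs y) (/ 4) _ Hy CV_radius_central_binom_Oh).
        - apply ex_pseries_scal; [intros; apply Rmult_comm|].
          apply CV_radius_inside, (Rbar_lt_le_trans (Rabs y) (/ 4) _ Hy CV_radius_central_binom). }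
      assert (D2 : is_derive (fun y => ln (1 - 4 * y) / 2) y (-4 / (1 - 4 * y) / 2)).
      { auto_derive; [lra | field; lra]. }
      rewrite PSeries_scal, PSeries_central_binom in D1 by exact Hy.
      replace 0 with (plus (2 * / sqrt (1 - 4 * y) / sqrt (1 - 4 * y)) (-4 / (1 - 4 * y) / 2)).
      + exact (is_derive_plus _ _ _ _ _ D1 D2).
      + unfold plus; simpl. set (s := sqrt (1 - 4 * y)) in *. rewrite <- Hssy. field. lra. }
  unfold central_binom_Oh_gf. apply Rmult_eq_reg_l with (sqrt (1 - 4 * x)); [|lra].
  replace (sqrt (1 - 4 * x) * PSeries central_binom_Oh x) with (- ln (1 - 4 * x) / 2) by lra.
  field. lra.
Qed.

Lemma is_series_central_binom_Oh (x : R) :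
  Rabs x < / 4 -> is_series (fun k => central_binom_Oh (S k) * x ^ S k) (central_binom_Oh_gf x).
Proof.
  intros Hx. rewrite <- PSeries_central_binom_Oh by exact Hx.
  apply (is_series_incr_1 (fun k => central_binom_Oh k * x ^ k)).
  rewrite central_binom_Oh_0, Rmult_0_l.
  change (plus (PSeries central_binom_Oh x) 0) with (PSeries central_binom_Oh x + 0).
  rewrite Rplus_0_r.
  apply is_pseries_R, PSeries_correct, CV_radius_inside.
  exact (Rbar_lt_le_trans (Rabs x) (/ 4) _ Hx CV_radius_central_binom_Oh).
Qed.

Definition beta : R := (1 - sqrt 5) / 2.

Lemma sqrt5_sqr : sqrt 5 * sqrt 5 = 5.
Proof. apply sqrt_sqrt. lra. Qed.

Lemma sqrt5_gt_2 : 2 < sqrt 5.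
Proof. assert (0 <= sqrt 5) by apply sqrt_pos. assert (E := sqrt5_sqr). nra. Qed.

Lemma alpha_sqr : alpha * alpha = alpha + 1.
Proof.
  unfold alpha. replace ((1 + sqrt 5) / 2 * ((1 + sqrt 5) / 2))
    with ((1 + 2 * sqrt 5 + sqrt 5 * sqrt 5) / 4) by field.
  rewrite sqrt5_sqr. field.
Qed.

Lemma alpha_bounds : 1 < alpha < 2.
Proof. assert (H := sqrt5_gt_2). assert (E := alpha_sqr). unfold alpha in *. nra. Qed.

Lemma beta_eq : beta = 1 - alpha.
Proof. unfold beta, alpha. field. Qed.

Lemma beta_sqr : beta * beta = beta + 1.
Proof. rewrite beta_eq. assert (E := alpha_sqr). lra. Qed.

Lemma alpha_mul_beta : alpha * beta = -1.
Proof. rewrite beta_eq. assert (E := alpha_sqr). lra. Qed.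

Lemma sqrt5_eq : sqrt 5 = alpha - beta.
Proof. unfold alpha, beta. field. Qed.

Lemma central_binom_Oh_gf_alpha8 :
  central_binom_Oh_gf (alpha / 8) = sqrt 2 * alpha * (2 * ln alpha + ln 2) / 2.
Proof.
  assert (E := alpha_sqr). assert (Ha := alpha_bounds).
  assert (0 < sqrt 2) by (apply sqrt_lt_R0; lra).
  assert (Hy : 1 - 4 * (alpha / 8) = / (2 * (alpha * alpha))).
  { apply Rmult_eq_reg_l with (2 * (alpha * alpha)); [|nra].
    rewrite Rinv_r by nra. rewrite E. nra. }
  unfold central_binom_Oh_gf.
  rewrite Hy, sqrt_inv, sqrt_mult, sqrt_square, ln_Rinv, !ln_mult by nra.
  field. split; nra.
Qed.

Lemma central_binom_Oh_gf_beta8 :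
  central_binom_Oh_gf (beta / 8) = sqrt 2 * beta * (2 * ln alpha - ln 2) / 2.
Proof.
  assert (E := alpha_sqr). assert (Ha := alpha_bounds).
  assert (0 < sqrt 2) by (apply sqrt_lt_R0; lra).
  assert (Hy : 1 - 4 * (beta / 8) = alpha * alpha * / 2) by (rewrite beta_eq, E; field).
  unfold central_binom_Oh_gf.
  rewrite Hy, sqrt_mult, sqrt_square, sqrt_inv, ln_mult, ln_Rinv, !ln_mult by nra.
  assert (Hb : beta = - / alpha).
  { apply Rmult_eq_reg_l with alpha; [|lra]. rewrite alpha_mul_beta. field. lra. }
  rewrite Hb. field. split; nra.
Qed.

Lemma fib_recurrent_binet (s : nat -> R) :
  (forall n, s (S (S n)) = s (S n) + s n) ->
  exists U V, forall n, s n = U * alpha ^ n + V * beta ^ n.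
Proof.
  intros Hs.
  exists ((s 1%nat - beta * s 0%nat) / sqrt 5), ((alpha * s 0%nat - s 1%nat) / sqrt 5).
  set (U := (s 1%nat - beta * s 0%nat) / sqrt 5).
  set (V := (alpha * s 0%nat - s 1%nat) / sqrt 5).
  assert (Hpair : forall n, s n = U * alpha ^ n + V * beta ^ n
                         /\ s (S n) = U * alpha ^ S n + V * beta ^ S n).
  { induction n as [|n [IH0 IH1]].
    - assert (H5 := sqrt5_gt_2). unfold U, V. rewrite sqrt5_eq in *.
      simpl. split; field; lra.
    - split; [exact IH1|].
      assert (Ha : alpha ^ S (S n) = alpha ^ S n + alpha ^ n)
        by (simpl; rewrite <- Rmult_assoc, alpha_sqr; ring).
      assert (Hb : beta ^ S (S n) = beta ^ S n + beta ^ n)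
        by (simpl; rewrite <- Rmult_assoc, beta_sqr; ring).
      rewrite Hs, IH0, IH1, Ha, Hb. ring. }
  intros n. apply Hpair.
Qed.

Lemma Rinv_sqrt2 : / sqrt 2 = sqrt 2 / 2.
Proof.
  assert (0 < sqrt 2) by (apply sqrt_lt_R0; lra).
  apply Rmult_eq_reg_l with (sqrt 2); [|lra].
  rewrite Rinv_r by lra. unfold Rdiv. rewrite <- Rmult_assoc, sqrt_sqrt by lra. field.
Qed.

Lemma is_series_central_binom_Oh_fib_recurrent (s : nat -> R) :
  (forall n, s (S (S n)) = s (S n) + s n) ->
  is_series (fun k => central_binom_Oh (S k) / 8 ^ S k * s (S k))
    (sqrt 2 * s 1%nat * ln alpha + ln 2 / sqrt 10 * (s 2%nat + s 0%nat)).
Proof.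
  intros Hs. destruct (fib_recurrent_binet s Hs) as (U & V & HUV).
  assert (Ha := alpha_bounds).
  assert (Hsa : Rabs (alpha / 8) < / 4) by (rewrite Rabs_pos_eq; lra).
  assert (Hsb : Rabs (beta / 8) < / 4) by (rewrite beta_eq, Rabs_left; lra).
  assert (Hser := is_series_plus _ _ _ _
    (is_series_scal U _ _ (is_series_central_binom_Oh _ Hsa))
    (is_series_scal V _ _ (is_series_central_binom_Oh _ Hsb))).
  rewrite central_binom_Oh_gf_alpha8, central_binom_Oh_gf_beta8 in Hser.
  assert (Hs1 : s 1%nat = U * alpha + V * beta) by (rewrite HUV; ring).
  assert (Hs20 : s 2%nat + s 0%nat = sqrt 5 * (U * alpha - V * beta)).
  { transitivity (sqrt 5 * (U * alpha - V * beta) + (U + V) * (1 + alpha * beta)).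
    - rewrite !HUV, sqrt5_eq. ring.
    - rewrite alpha_mul_beta. ring. }
  assert (H5 := sqrt5_gt_2).
  replace (sqrt 10) with (sqrt 2 * sqrt 5) by (rewrite <- sqrt_mult by lra; f_equal; lra).
  rewrite Hs1, Hs20.
  replace (sqrt 2 * (U * alpha + V * beta) * ln alpha
           + ln 2 / (sqrt 2 * sqrt 5) * (sqrt 5 * (U * alpha - V * beta)))
    with (U * (sqrt 2 * alpha * (2 * ln alpha + ln 2) / 2)
          + V * (sqrt 2 * beta * (2 * ln alpha - ln 2) / 2)).
  - eapply is_series_ext; [|exact Hser].
    intros n. unfold plus, scal; simpl. change mult with Rmult.
    rewrite (HUV (S n)). unfold Rdiv. rewrite !Rpow_mult_distr, pow_inv, Rinv_mult. simpl. ring.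
  - unfold Rdiv. rewrite Rinv_mult, Rinv_sqrt2. field. lra.
Qed.

Definition fib_recurrent (u : Z -> R) : Prop :=
  forall j, u (j + 2)%Z = u (j + 1)%Z + u j.

Lemma gib_of_nat (a b : R) (n : nat) : gib a b (Z.of_nat n) = gib_pos a b n.
Proof. destruct n; [reflexivity|]. simpl. rewrite SuccNat2Pos.id_succ. reflexivity. Qed.

Lemma gib_opp_of_nat (a b : R) (n : nat) : gib a b (- Z.of_nat n) = gib_neg a b n.
Proof. destruct n; [reflexivity|]. simpl. rewrite SuccNat2Pos.id_succ. reflexivity. Qed.

Lemma gib_pos_succ2 (a b : R) (n : nat) :
  gib_pos a b (S (S n)) = gib_pos a b (S n) + gib_pos a b n.
Proof. unfold gib_pos. simpl. ring. Qed.

Lemma gib_neg_succ2 (a b : R) (n : nat) :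
  gib_neg a b (S (S n)) = gib_neg a b n - gib_neg a b (S n).
Proof. unfold gib_neg. simpl. ring. Qed.

Lemma gib_recurrent (a b : R) : fib_recurrent (gib a b).
Proof.
  intros j. destruct (Z_le_gt_dec 0 j) as [Hj|Hj].
  - replace j with (Z.of_nat (Z.to_nat j)) by lia. set (n := Z.to_nat j).
    replace (Z.of_nat n + 2)%Z with (Z.of_nat (S (S n))) by lia.
    replace (Z.of_nat n + 1)%Z with (Z.of_nat (S n)) by lia.
    rewrite !gib_of_nat. apply gib_pos_succ2.
  - destruct (Z.eq_dec j (-1)) as [->|Hj1].
    + unfold gib, gib_pos, gib_neg. simpl. ring.
    + replace j with (- Z.of_nat (S (S (Z.to_nat (- j - 2)))))%Z by lia.
      set (n := Z.to_nat (- j - 2)).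
      replace (- Z.of_nat (S (S n)) + 2)%Z with (- Z.of_nat n)%Z by lia.
      replace (- Z.of_nat (S (S n)) + 1)%Z with (- Z.of_nat (S n))%Z by lia.
      rewrite !gib_opp_of_nat, gib_neg_succ2. ring.
Qed.

Lemma fib_recurrent_shift (u : Z -> R) (k : Z) :
  fib_recurrent u -> fib_recurrent (fun j => u (j + k)%Z).
Proof.
  intros Hu j. replace (j + 2 + k)%Z with (j + k + 2)%Z by lia.
  replace (j + 1 + k)%Z with (j + k + 1)%Z by lia. apply Hu.
Qed.

Lemma fib_recurrent_add (u v : Z -> R) :
  fib_recurrent u -> fib_recurrent v -> fib_recurrent (fun j => u j + v j).
Proof. intros Hu Hv j. rewrite Hu, Hv. ring. Qed.

Lemma fib_recurrent_scal (c : R) (u : Z -> R) :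
  fib_recurrent u -> fib_recurrent (fun j => c * u j).
Proof. intros Hu j. rewrite Hu. ring. Qed.

Lemma fib_recurrent_eq (u v : Z -> R) :
  fib_recurrent u -> fib_recurrent v -> u 0%Z = v 0%Z -> u 1%Z = v 1%Z ->
  forall j, u j = v j.
Proof.
  intros Hu Hv H0 H1.
  assert (Hnat : forall n, u (Z.of_nat n) = v (Z.of_nat n)
                        /\ u (Z.of_nat n + 1)%Z = v (Z.of_nat n + 1)%Z).
  { induction n as [|n [IH0 IH1]]; [split; assumption|].
    replace (Z.of_nat (S n)) with (Z.of_nat n + 1)%Z by lia. split; [exact IH1|].
    replace (Z.of_nat n + 1 + 1)%Z with (Z.of_nat n + 2)%Z by lia.
    rewrite Hu, Hv, IH0, IH1. reflexivity. }
  assert (Hneg : forall n, u (- Z.of_nat n)%Z = v (- Z.of_nat n)%Z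
                        /\ u (- Z.of_nat n + 1)%Z = v (- Z.of_nat n + 1)%Z).
  { induction n as [|n [IH0 IH1]]; [split; assumption|].
    replace (- Z.of_nat (S n) + 1)%Z with (- Z.of_nat n)%Z by lia. split; [|exact IH0].
    assert (Ru := Hu (- Z.of_nat (S n))%Z). assert (Rv := Hv (- Z.of_nat (S n))%Z).
    replace (- Z.of_nat (S n) + 2)%Z with (- Z.of_nat n + 1)%Z in Ru, Rv by lia.
    replace (- Z.of_nat (S n) + 1)%Z with (- Z.of_nat n)%Z in Ru, Rv by lia.
    lra. }
  intros j. destruct (Z_le_gt_dec 0 j).
  - replace j with (Z.of_nat (Z.to_nat j)) by lia. apply Hnat.
  - replace j with (- Z.of_nat (Z.to_nat (- j)))%Z by lia. apply Hneg.
Qed.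

Lemma div_sqrt10_mul_5 (x : R) : 5 * (x / sqrt 10) = sqrt 10 * x / 2.
Proof.
  assert (H10 : sqrt 10 * sqrt 10 = 10) by (apply sqrt_sqrt; lra).
  assert (0 < sqrt 10) by (apply sqrt_lt_R0; lra).
  set (r := sqrt 10) in *.
  apply Rmult_eq_reg_l with r; [|lra].
  replace (r * (r * x / 2)) with (r * r * x / 2) by field.
  rewrite H10. field. lra.
Qed.

Lemma Luc_add2_add (t : Z) : Luc (t + 2) + Luc t = 5 * Fib (t + 1).
Proof.
  apply (fib_recurrent_eq (fun j => Luc (j + 2)%Z + Luc j) (fun j => 5 * Fib (j + 1)%Z)).
  - apply (fib_recurrent_add (fun j => Luc (j + 2)%Z)); [apply fib_recurrent_shift|];
      apply gib_recurrent.
  - apply fib_recurrent_scal, (fib_recurrent_shift Fib), gib_recurrent.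
  - unfold Luc, Fib, gib, gib_pos. simpl. ring.
  - unfold Luc, Fib, gib, gib_pos. simpl. ring.
Qed.

Lemma Fib_add2_add (t : Z) : Fib (t + 2) + Fib t = Luc (t + 1).
Proof.
  apply (fib_recurrent_eq (fun j => Fib (j + 2)%Z + Fib j) (fun j => Luc (j + 1)%Z)).
  - apply (fib_recurrent_add (fun j => Fib (j + 2)%Z)); [apply fib_recurrent_shift|];
      apply gib_recurrent.
  - apply (fib_recurrent_shift Luc), gib_recurrent.
  - unfold Luc, Fib, gib, gib_pos. simpl. ring.
  - unfold Luc, Fib, gib, gib_pos. simpl. ring.
Qed.

Lemma is_series_gib (a b : R) (t : Z) :
  is_series (fun k => term (gib a b) t (S k))
    (sqrt 2 * gib a b (t + 1) * ln alpha
     + ln 2 / sqrt 10 * (gib a b (t + 2) + gib a b t)).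
Proof.
  set (s := fun n : nat => gib a b (Z.of_nat n + t)).
  assert (Hs : forall n, s (S (S n)) = s (S n) + s n).
  { intros n. unfold s.
    replace (Z.of_nat (S (S n)) + t)%Z with (Z.of_nat n + t + 2)%Z by lia.
    replace (Z.of_nat (S n) + t)%Z with (Z.of_nat n + t + 1)%Z by lia.
    apply gib_recurrent. }
  replace (gib a b (t + 1)) with (s 1%nat) by (unfold s; f_equal; lia).
  replace (gib a b (t + 2)) with (s 2%nat) by (unfold s; f_equal; lia).
  replace (gib a b t) with (s 0%nat) by reflexivity.
  exact (is_series_central_binom_Oh_fib_recurrent s Hs).
Qed.

Theorem theorem12 :
  (forall t : Z,
     is_series (fun k : nat => term Luc t (S k))
       (sqrt 2 * Luc (t + 1) * ln alpha + sqrt 10 * ln 2 / 2 * Fib (t + 1)))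
  /\
  (forall t : Z,
     is_series (fun k : nat => term Fib t (S k))
       (sqrt 2 * Fib (t + 1) * ln alpha + ln 2 / sqrt 10 * Luc (t + 1)))
  /\
  (forall (a b : R) (t : Z), ~ (a = 0 /\ b = 0) ->
     is_series (fun k : nat => term (gib a b) t (S k))
       (sqrt 2 * gib a b (t + 1) * ln alpha
        + ln 2 / sqrt 10 * (gib a b (t + 2) + gib a b t))).
Proof.
  split; [|split].
  - intros t.
    replace (sqrt 10 * ln 2 / 2 * Fib (t + 1))
      with (ln 2 / sqrt 10 * (Luc (t + 2) + Luc t)).
    + apply is_series_gib.
    + rewrite Luc_add2_add, <- div_sqrt10_mul_5. unfold Rdiv. ring.
  - intros t. rewrite <- Fib_add2_add. apply is_series_gib.
  -
    intros a b t _. apply is_series_gib.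
Qed.
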